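(* Let $\mathcal C$ be a well-formed CCCP configuration such that there is no $\mathcal C'$ with $\mathcal C\to_i\mathcal C'$. Then there is a configuration $\mathcal C''$ with $\mathcal C\to_\sigma\mathcal C''$.
   Context: CCCP syntax. Fix a set of channels (ranged over by $c,d$) and a set of values containing data variables $x,y$ and a special error value $\mathtt{err}$; closed values $v,w$ contain no variables, and each closed value $v$ has a transmission time $\delta_v\in\mathbb{N}$ with $\delta_v\ge 1$. Expressions $e$ are built from values; closed expressions evaluate to closed values via $[\![e]\!]$. Station code (processes) is given by $P,Q ::= c!\langle e\rangle.P \mid \lfloor ?c(x).P\rfloor Q \mid \sigma.P \mid \tau.P \mid P+Q \mid [b]P,Q \mid X \mid \mathbf{0} \mid \mathrm{fix}\,X.P$, where $b$ is either $e_1=e_2$ or $\mathrm{exp}(c)$, $[b]P,Q$ is a conditional (then-branch $P$, else-branch $Q$), $\lfloor ?c(x).P\rfloor Q$ is a receiver on $c$ with timeout branch $Q$ ($x$ bound in $P$), $\sigma.P$ is a one-unit delay and $\sigma^n.P$ denotes $n$ nested delays. System terms are $W ::= P \mid \lfloor ?c(x).P\rfloor \mid W_1|W_2 \mid \nu c{:}(n,v).W$, where $\lfloor ?c(x).P\rfloor$ is an active receiver ($x$ bound in $P$) and $\nu c{:}(n,v).W$ restricts $c$ with local channel state $(n,v)$. In $\mathrm{fix}\,X.P$ every occurrence of $X$ in $P$ is guarded, i.e. lies within a broadcast prefix, a receiver continuation, a timeout branch, a $\sigma$-prefix, or a branch of a conditional. Terms are identified up to $\alpha$-conversion. A channel environment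 is a map $\Gamma$ from channels to $\mathbb{N}\times$(closed values); write $\Gamma\vdash_t c:n$ and $\Gamma\vdash_v c:w$ when $\Gamma(c)=(n,w)$; $c$ is idle in $\Gamma$ if $\Gamma\vdash_t c:0$ and exposed otherwise; $\Gamma[c\mapsto(n,v)]$ is $\Gamma$ updated at $c$; $\Gamma\le\Gamma'$ iff for every $c$, $\Gamma\vdash_t c:n$ and $\Gamma'\vdash_t c:m$ imply $n\le m$. A configuration $\Gamma\triangleright W$ is a channel environment together with a closed system term (no free data or process variables). Intensional semantics. Actions $\lambda$ are $c!v$, $c?v$, $\sigma$, $\tau$. The environment update $\lambda(\Gamma)$ is: $\sigma(\Gamma)(c)=(\max(n-1,0),w)$ whenever $\Gamma(c)=(n,w)$; $c!v(\Gamma)$ agrees with $\Gamma$ except at $c$, where it is $(\delta_v,v)$ if $c$ is idle in $\Gamma$ and $(\max(\delta_v,n),\mathtt{err})$ if $\Gamma\vdash_t c:n>0$; $c?v(\Gamma)=c!v(\Gamma)$; $\tau(\Gamma)=\Gamma$. The predicate $\mathrm{rcv}(W,c)$ on terms is: true for $\lfloor ?d(x).P\rfloor Q$ iff $d=c$; $\mathrm{rcv}(P+Q,c)=\mathrm{rcv}(P,c)\vee\mathrm{rcv}(Q,c)$; $\mathrm{rcv}(\mathrm{fix}\,X.P,c)=\mathrm{rcv}(P,c)$; $\mathrm{rcv}(W_1|W_2,c)=\mathrm{rcv}(W_1,c)\vee\mathrm{rcv}(W_2,c)$; $\mathrm{rcv}(\nu d{:}(n,v).W,c)=\mathrm{rcv}(W,c)$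 (with $d\neq c$ by $\alpha$-conversion); false for all other forms (broadcasts, $\tau.P$, $\sigma.P$, conditionals, $X$, $\mathbf 0$, active receivers). Then $\mathrm{rcv}(\Gamma\triangleright W,c)$ holds iff $c$ is idle in $\Gamma$ and $\mathrm{rcv}(W,c)$. Transitions $\Gamma\triangleright W\xrightarrow{\lambda}W'$ are the least relation closed under: (Snd) $[\![e]\!]=v$ implies $\Gamma\triangleright c!\langle e\rangle.P\xrightarrow{c!v}\sigma^{\delta_v}.P$; (Rcv) $c$ idle in $\Gamma$ implies $\Gamma\triangleright\lfloor ?c(x).P\rfloor Q\xrightarrow{c?v}\lfloor ?c(x).P\rfloor$; (RcvIgn) $\neg\mathrm{rcv}(\Gamma\triangleright W,c)$ implies $\Gamma\triangleright W\xrightarrow{c?v}W$; (Sync) $\Gamma\triangleright W_1\xrightarrow{c!v}W_1'$ and $\Gamma\triangleright W_2\xrightarrow{c?v}W_2'$ imply $\Gamma\triangleright W_1|W_2\xrightarrow{c!v}W_1'|W_2'$, and symmetrically; (RcvPar) $\Gamma\triangleright W_i\xrightarrow{c?v}W_i'$ for $i=1,2$ imply $\Gamma\triangleright W_1|W_2\xrightarrow{c?v}W_1'|W_2'$; (TimeNil) $\Gamma\triangleright\mathbf 0\xrightarrow{\sigma}\mathbf 0$; (Sleep) $\Gamma\triangleright\sigma.P\xrightarrow{\sigma}P$; (ActRcv) $\Gamma\vdash_t c:n$, $n>1$ imply $\Gamma\triangleright\lfloor ?c(x).P\rfloor\xrightarrow{\sigma}\lfloor ?c(x).P\rfloor$;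 (EndRcv) $\Gamma\vdash_t c:1$, $\Gamma\vdash_v c:w$ imply $\Gamma\triangleright\lfloor ?c(x).P\rfloor\xrightarrow{\sigma}\{w/x\}P$; (Timeout) $c$ idle in $\Gamma$ implies $\Gamma\triangleright\lfloor ?c(x).P\rfloor Q\xrightarrow{\sigma}Q$; (RcvLate) $c$ exposed in $\Gamma$ implies $\Gamma\triangleright\lfloor ?c(x).P\rfloor Q\xrightarrow{\tau}\lfloor ?c(x).\{\mathtt{err}/x\}P\rfloor$; (Tau) $\Gamma\triangleright\tau.P\xrightarrow{\tau}P$; (Then)/(Else) $\Gamma\triangleright[b]P,Q\xrightarrow{\tau}\sigma.P$ if $[\![b]\!]_\Gamma$ is true and $\xrightarrow{\tau}\sigma.Q$ otherwise, where $[\![e_1=e_2]\!]_\Gamma$ is true iff $[\![e_1]\!]=[\![e_2]\!]$ and $[\![\mathrm{exp}(c)]\!]_\Gamma$ is true iff $c$ is exposed in $\Gamma$; (TimePar) $\Gamma\triangleright W_i\xrightarrow{\sigma}W_i'$ for $i=1,2$ imply $\Gamma\triangleright W_1|W_2\xrightarrow{\sigma}W_1'|W_2'$; (TauPar) $\Gamma\triangleright W_1\xrightarrow{\tau}W_1'$ implies $\Gamma\triangleright W_1|W_2\xrightarrow{\tau}W_1'|W_2$, and symmetrically; (Rec) $\Gamma\triangleright\{\mathrm{fix}\,X.P/X\}P\xrightarrow{\lambda}W$ implies $\Gamma\triangleright\mathrm{fix}\,X.P\xrightarrow{\lambda}W$; (Sum) for $\lambda\in\{\tau,c!v\}$, $\Gamma\triangleright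 P\xrightarrow{\lambda}W$ implies $\Gamma\triangleright P+Q\xrightarrow{\lambda}W$, and symmetrically; (SumTime) $\Gamma\triangleright P\xrightarrow{\sigma}P'$, $\Gamma\triangleright Q\xrightarrow{\sigma}Q'$ imply $\Gamma\triangleright P+Q\xrightarrow{\sigma}P'+Q'$; (SumRcv) $\Gamma\triangleright P\xrightarrow{c?v}W$ and $\mathrm{rcv}(\Gamma\triangleright P,c)$ imply $\Gamma\triangleright P+Q\xrightarrow{c?v}W$, and symmetrically; (ResI) $\Gamma[c\mapsto(n,v)]\triangleright W\xrightarrow{c!w}W'$ implies $\Gamma\triangleright\nu c{:}(n,v).W\xrightarrow{\tau}\nu c{:}(c!w(\Gamma[c\mapsto(n,v)]))(c).W'$; (ResV) $\Gamma[c\mapsto(n,v)]\triangleright W\xrightarrow{\lambda}W'$ with $c$ not occurring in $\lambda$ implies $\Gamma\triangleright\nu c{:}(n,v).W\xrightarrow{\lambda}\nu c{:}(\lambda(\Gamma[c\mapsto(n,v)]))(c).W'$. Reductions. $\Gamma\triangleright W\to\Gamma'\triangleright W'$ iff $\Gamma\triangleright W\xrightarrow{\lambda}W'$ for some $\lambda\in\{c!v,\sigma,\tau\}$ and $\Gamma'=\lambda(\Gamma)$; it is instantaneous ($\to_i$) if $\lambda\neq\sigma$ and timed ($\to_\sigma$) if $\lambda=\sigma$. Well-formedness. The set of well-formed configurations is the least set such that: $\Gamma\triangleright P$ is well-formed for every closed process $P$; $\Gamma\triangleright\lfloor ?c(x).P\rfloor$ is well-formed whenever $c$ is exposed in $\Gamma$;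 $\Gamma\triangleright W_1|W_2$ is well-formed whenever $\Gamma\triangleright W_1$ and $\Gamma\triangleright W_2$ are; $\Gamma\triangleright\nu c{:}(n,v).W$ is well-formed whenever $\Gamma[c\mapsto(n,v)]\triangleright W$ is. *)

(* Conventions:
   - channels are de Bruijn indices (nat); nu binds index 0, so
     alpha-conversion of restricted channels is built in;
   - data variables and process variables are names (nat); terms are
     compared up to alpha-conversion only implicitly (all substitutions
     performed by the semantics substitute closed terms);
   - closed values form an arbitrary type V with a distinguished error
     value err and transmission-time function delta;
   - expressions are built from closed values and data variables by
     arbitrary (unary/binary) functions on closed values. *)
From Stdlib Require Import Arith List.
Import ListNotations.

Section CCCP.

Variable V : Type.
Variable err : V.
Variable delta : V -> nat.

Definition chan := nat.
Definition dvar := nat.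
Definition pvar := nat.

Inductive exp : Type :=
| EVal : V -> exp
| EVar : dvar -> exp
| EOp1 : (V -> V) -> exp -> exp
| EOp2 : (V -> V -> V) -> exp -> exp -> exp.

Fixpoint eval (e : exp) : option V :=
  match e with
  | EVal v => Some v
  | EVar _ => None
  | EOp1 f e1 => match eval e1 with Some v => Some (f v) | None => None end
  | EOp2 f e1 e2 =>
      match eval e1, eval e2 with
      | Some v1, Some v2 => Some (f v1 v2)
      | _, _ => None
      end
  end.

Inductive bexp : Type :=
| BEq : exp -> exp -> bexp
| BExp : chan -> bexp.

Inductive proc : Type :=
| PSnd : chan -> exp -> proc -> proc
| PRcv : chan -> dvar -> proc -> proc -> proc     (* |_ ?c(x).P _| Q *)
| PSig : proc -> proc
| PTau : proc -> proc
| PSum : proc -> proc -> proc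
| PIf  : bexp -> proc -> proc -> proc
| PVar : pvar -> proc
| PNil : proc
| PFix : pvar -> proc -> proc.

Inductive sys : Type :=
| SProc : proc -> sys
| SAct  : chan -> dvar -> proc -> sys             (* active receiver |_ ?c(x).P _| *)
| SPar  : sys -> sys -> sys
| SNu   : nat -> V -> sys -> sys.                 (* nu c:(n,v).W, c = index 0 in W *)

Fixpoint sigN (n : nat) (P : proc) : proc :=
  match n with 0 => P | S m => PSig (sigN m P) end.

Fixpoint substE (w : V) (x : dvar) (e : exp) : exp :=
  match e with
  | EVal v => EVal v
  | EVar y => if Nat.eqb y x then EVal w else EVar y
  | EOp1 f e1 => EOp1 f (substE w x e1)
  | EOp2 f e1 e2 => EOp2 f (substE w x e1) (substE w x e2)
  end.

Definition substB (w : V) (x : dvar) (b : bexp) : bexp :=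
  match b with
  | BEq e1 e2 => BEq (substE w x e1) (substE w x e2)
  | BExp c => BExp c
  end.

Fixpoint substP (w : V) (x : dvar) (P : proc) : proc :=
  match P with
  | PSnd c e P1 => PSnd c (substE w x e) (substP w x P1)
  | PRcv c y P1 Q1 =>
      PRcv c y (if Nat.eqb y x then P1 else substP w x P1) (substP w x Q1)
  | PSig P1 => PSig (substP w x P1)
  | PTau P1 => PTau (substP w x P1)
  | PSum P1 Q1 => PSum (substP w x P1) (substP w x Q1)
  | PIf b P1 Q1 => PIf (substB w x b) (substP w x P1) (substP w x Q1)
  | PVar X => PVar X
  | PNil => PNil
  | PFix X P1 => PFix X (substP w x P1)
  end.

Fixpoint substX (R : proc) (X : pvar) (P : proc) : proc :=
  match P with
  | PSnd c e P1 => PSnd c e (substX R X P1)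
  | PRcv c y P1 Q1 => PRcv c y (substX R X P1) (substX R X Q1)
  | PSig P1 => PSig (substX R X P1)
  | PTau P1 => PTau (substX R X P1)
  | PSum P1 Q1 => PSum (substX R X P1) (substX R X Q1)
  | PIf b P1 Q1 => PIf b (substX R X P1) (substX R X Q1)
  | PVar Y => if Nat.eqb Y X then R else PVar Y
  | PNil => PNil
  | PFix Y P1 => if Nat.eqb Y X then PFix Y P1 else PFix Y (substX R X P1)
  end.

Fixpoint closedE (ds : list dvar) (e : exp) : Prop :=
  match e with
  | EVal _ => True
  | EVar x => In x ds
  | EOp1 _ e1 => closedE ds e1
  | EOp2 _ e1 e2 => closedE ds e1 /\ closedE ds e2
  end.

Definition closedB (ds : list dvar) (b : bexp) : Prop :=
  match b with
  | BEq e1 e2 => closedE ds e1 /\ closedE ds e2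
  | BExp _ => True
  end.

Fixpoint closedP (ds : list dvar) (Xs : list pvar) (P : proc) : Prop :=
  match P with
  | PSnd _ e P1 => closedE ds e /\ closedP ds Xs P1
  | PRcv _ x P1 Q1 => closedP (x :: ds) Xs P1 /\ closedP ds Xs Q1
  | PSig P1 => closedP ds Xs P1
  | PTau P1 => closedP ds Xs P1
  | PSum P1 Q1 => closedP ds Xs P1 /\ closedP ds Xs Q1
  | PIf b P1 Q1 => closedB ds b /\ closedP ds Xs P1 /\ closedP ds Xs Q1
  | PVar X => In X Xs
  | PNil => True
  | PFix X P1 => closedP ds (X :: Xs) P1
  end.

Definition closed_proc (P : proc) : Prop := closedP [] [] P.

Fixpoint closed_sys (W : sys) : Prop :=
  match W with
  | SProc P => closedP [] [] P
  | SAct _ x P => closedP [x] [] P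
  | SPar W1 W2 => closed_sys W1 /\ closed_sys W2
  | SNu _ _ W1 => closed_sys W1
  end.

Fixpoint guarded (X : pvar) (P : proc) : Prop :=
  match P with
  | PSnd _ _ _ => True
  | PRcv _ _ _ _ => True
  | PSig _ => True
  | PTau P1 => guarded X P1
  | PSum P1 Q1 => guarded X P1 /\ guarded X Q1
  | PIf _ _ _ => True
  | PVar Y => Y <> X
  | PNil => True
  | PFix Y P1 => Y = X \/ guarded X P1
  end.

Fixpoint guardedP (P : proc) : Prop :=
  match P with
  | PSnd _ _ P1 => guardedP P1
  | PRcv _ _ P1 Q1 => guardedP P1 /\ guardedP Q1
  | PSig P1 => guardedP P1
  | PTau P1 => guardedP P1
  | PSum P1 Q1 => guardedP P1 /\ guardedP Q1
  | PIf _ P1 Q1 => guardedP P1 /\ guardedP Q1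
  | PVar _ => True
  | PNil => True
  | PFix X P1 => guarded X P1 /\ guardedP P1
  end.

Fixpoint guardedS (W : sys) : Prop :=
  match W with
  | SProc P => guardedP P
  | SAct _ _ P => guardedP P
  | SPar W1 W2 => guardedS W1 /\ guardedS W2
  | SNu _ _ W1 => guardedS W1
  end.

Definition env := chan -> (nat * V).

Definition idle (G : env) (c : chan) : Prop := fst (G c) = 0.
Definition exposed (G : env) (c : chan) : Prop := fst (G c) <> 0.

(* environment for the body of a restriction: index 0 is the bound channel *)
Definition scons (p : nat * V) (G : env) : env :=
  fun d => match d with 0 => p | S d' => G d' end.

Inductive act : Type :=
| ASnd : chan -> V -> act
| ARcv : chan -> V -> act
| ASig : act
| ATau : act.

Definition lift (l : act) : act :=
  match l with
  | ASnd c v => ASnd (S c) v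
  | ARcv c v => ARcv (S c) v
  | ASig => ASig
  | ATau => ATau
  end.

Definition bcast_upd (c : chan) (v : V) (G : env) : env :=
  fun d => if Nat.eqb d c then
             (if Nat.eqb (fst (G c)) 0 then (delta v, v)
              else (Nat.max (delta v) (fst (G c)), err))
           else G d.

Definition upd (l : act) (G : env) : env :=
  match l with
  | ASnd c v => bcast_upd c v G
  | ARcv c v => bcast_upd c v G
  | ASig => fun d => (fst (G d) - 1, snd (G d))
  | ATau => G
  end.

Fixpoint rcvP (P : proc) (c : chan) : Prop :=
  match P with
  | PRcv d _ _ _ => d = c
  | PSum P1 Q1 => rcvP P1 c \/ rcvP Q1 c
  | PFix _ P1 => rcvP P1 c
  | _ => False
  end.

Fixpoint rcvS (W : sys) (c : chan) : Prop :=
  match W with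
  | SProc P => rcvP P c
  | SAct _ _ _ => False
  | SPar W1 W2 => rcvS W1 c \/ rcvS W2 c
  | SNu _ _ W1 => rcvS W1 (S c)   (* the bound channel is index 0 *)
  end.

Definition rcv_conf (G : env) (W : sys) (c : chan) : Prop :=
  idle G c /\ rcvS W c.

Definition beval (G : env) (b : bexp) (t : bool) : Prop :=
  match b with
  | BEq e1 e2 => exists v1 v2, eval e1 = Some v1 /\ eval e2 = Some v2 /\
                 ((v1 = v2 /\ t = true) \/ (v1 <> v2 /\ t = false))
  | BExp c => (exposed G c /\ t = true) \/ (idle G c /\ t = false)
  end.

Inductive step : env -> sys -> act -> sys -> Prop :=
| TSnd : forall G c e P v,
    eval e = Some v ->
    step G (SProc (PSnd c e P)) (ASnd c v) (SProc (sigN (delta v) P))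
| TRcv : forall G c x P Q v,
    idle G c ->
    step G (SProc (PRcv c x P Q)) (ARcv c v) (SAct c x P)
| TRcvIgn : forall G W c v,
    ~ rcv_conf G W c ->
    step G W (ARcv c v) W
| TSyncL : forall G W1 W2 W1' W2' c v,
    step G W1 (ASnd c v) W1' -> step G W2 (ARcv c v) W2' ->
    step G (SPar W1 W2) (ASnd c v) (SPar W1' W2')
| TSyncR : forall G W1 W2 W1' W2' c v,
    step G W1 (ARcv c v) W1' -> step G W2 (ASnd c v) W2' ->
    step G (SPar W1 W2) (ASnd c v) (SPar W1' W2')
| TRcvPar : forall G W1 W2 W1' W2' c v,
    step G W1 (ARcv c v) W1' -> step G W2 (ARcv c v) W2' ->
    step G (SPar W1 W2) (ARcv c v) (SPar W1' W2')
| TTimeNil : forall G,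
    step G (SProc PNil) ASig (SProc PNil)
| TSleep : forall G P,
    step G (SProc (PSig P)) ASig (SProc P)
| TActRcv : forall G c x P,
    1 < fst (G c) ->
    step G (SAct c x P) ASig (SAct c x P)
| TEndRcv : forall G c x P,
    fst (G c) = 1 ->
    step G (SAct c x P) ASig (SProc (substP (snd (G c)) x P))
| TTimeout : forall G c x P Q,
    idle G c ->
    step G (SProc (PRcv c x P Q)) ASig (SProc Q)
| TRcvLate : forall G c x P Q,
    exposed G c ->
    step G (SProc (PRcv c x P Q)) ATau (SAct c x (substP err x P))
| TTau : forall G P,
    step G (SProc (PTau P)) ATau (SProc P)
| TThen : forall G b P Q,
    beval G b true ->
    step G (SProc (PIf b P Q)) ATau (SProc (PSig P))
| TElse : forall G b P Q,
    beval G b false ->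
    step G (SProc (PIf b P Q)) ATau (SProc (PSig Q))
| TTimePar : forall G W1 W2 W1' W2',
    step G W1 ASig W1' -> step G W2 ASig W2' ->
    step G (SPar W1 W2) ASig (SPar W1' W2')
| TTauParL : forall G W1 W2 W1',
    step G W1 ATau W1' ->
    step G (SPar W1 W2) ATau (SPar W1' W2)
| TTauParR : forall G W1 W2 W2',
    step G W2 ATau W2' ->
    step G (SPar W1 W2) ATau (SPar W1 W2')
| TRec : forall G X P l W,
    step G (SProc (substX (PFix X P) X P)) l W ->
    step G (SProc (PFix X P)) l W
| TSumL : forall G P Q l W,
    (l = ATau \/ exists c v, l = ASnd c v) ->
    step G (SProc P) l W ->
    step G (SProc (PSum P Q)) l W
| TSumR : forall G P Q l W,
    (l = ATau \/ exists c v, l = ASnd c v) ->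
    step G (SProc Q) l W ->
    step G (SProc (PSum P Q)) l W
| TSumTime : forall G P Q P' Q',
    step G (SProc P) ASig (SProc P') -> step G (SProc Q) ASig (SProc Q') ->
    step G (SProc (PSum P Q)) ASig (SProc (PSum P' Q'))
| TSumRcvL : forall G P Q c v W,
    step G (SProc P) (ARcv c v) W -> rcv_conf G (SProc P) c ->
    step G (SProc (PSum P Q)) (ARcv c v) W
| TSumRcvR : forall G P Q c v W,
    step G (SProc Q) (ARcv c v) W -> rcv_conf G (SProc Q) c ->
    step G (SProc (PSum P Q)) (ARcv c v) W
| TResI : forall G n v W w W',
    step (scons (n, v) G) W (ASnd 0 w) W' ->
    step G (SNu n v W) ATau
      (SNu (fst (upd (ASnd 0 w) (scons (n, v) G) 0))
           (snd (upd (ASnd 0 w) (scons (n, v) G) 0)) W')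
| TResV : forall G n v W l W',
    (* the label of the body is l shifted under the binder, so it does not
       mention the restricted channel *)
    step (scons (n, v) G) W (lift l) W' ->
    step G (SNu n v W) l
      (SNu (fst (upd (lift l) (scons (n, v) G) 0))
           (snd (upd (lift l) (scons (n, v) G) 0)) W').

Definition red_i (G : env) (W : sys) (G' : env) (W' : sys) : Prop :=
  exists l, (l = ATau \/ exists c v, l = ASnd c v) /\
            step G W l W' /\ G' = upd l G.

Definition red_sigma (G : env) (W : sys) (G' : env) (W' : sys) : Prop :=
  step G W ASig W' /\ G' = upd ASig G.

Inductive wf : env -> sys -> Prop :=
| WfProc : forall G P, closed_proc P -> wf G (SProc P)
| WfAct : forall G c x P, exposed G c -> wf G (SAct c x P)
| WfPar : forall G W1 W2, wf G W1 -> wf G W2 -> wf G (SPar W1 W2)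
| WfNu : forall G n v W, wf (scons (n, v) G) W -> wf G (SNu n v W).

End CCCP.

(* Sequential processes are
   analysed by their top-level shape, unfolding recursion (which terminates
   because recursion variables are guarded); a receiver on an exposed channel
   can always move late with [err], and on an idle channel it can time out.
   For parallel composition, an output of one component synchronises with the
   other because every system is input-enabled (it accepts or ignores any
   value), and if neither component moves instantaneously both let time
   pass.  Well-formedness guarantees that active receivers sit on exposed
   channels and hence can always idle. *)
From Stdlib Require Import Arith List Lia Classical.
Import ListNotations.

Section Syntax.

Variable V : Type.

Lemma closedE_incl ds ds' (e : exp V) :
  incl ds ds' -> closedE V ds e -> closedE V ds' e.
Proof. induction e; simpl; intuition. Qed.

Lemma closedP_incl (P : proc V) : forall ds ds' Xs Xs',
  incl ds ds' -> incl Xs Xs' -> closedP V ds Xs P -> closedP V ds' Xs' P.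
Proof.
  induction P as [c e P IH|c x P IHP Q IHQ|P IH|P IH|P IHP Q IHQ
                 |b P IHP Q IHQ|X| |X P IH];
    simpl; intros ds ds' Xs Xs' Hd HX H.
  - destruct H; split; [eapply closedE_incl|eapply IH]; eauto.
  - destruct H; split; [eapply IHP|eapply IHQ]; eauto.
    apply incl_cons; [apply in_eq|apply incl_tl; auto].
  - eauto.
  - eauto.
  - destruct H; split; eauto.
  - destruct H as [Hb [HP HQ]]; repeat split; eauto.
    destruct b; simpl in *; [destruct Hb; split; eapply closedE_incl|]; eauto.
  - auto.
  - auto.
  - eapply IH; eauto. apply incl_cons; [apply in_eq|apply incl_tl; auto].
Qed.

Lemma closedP_substX (P : proc V) : forall ds Xs X R,
  closedP V [] [] R -> closedP V ds (X :: Xs) P ->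
  closedP V ds Xs (substX V R X P).
Proof.
  induction P as [c e P IH|c x P IHP Q IHQ|P IH|P IH|P IHP Q IHQ
                 |b P IHP Q IHQ|Y| |Y P IH];
    simpl; intros ds Xs X R HR H.
  - destruct H; split; auto.
  - destruct H; split; auto.
  - auto.
  - auto.
  - destruct H; split; auto.
  - destruct H as [? [? ?]]; repeat split; auto.
  - destruct (Nat.eqb_spec Y X) as [_|HYX].
    + eapply closedP_incl; [| |exact HR]; intros z [].
    + destruct H; [congruence|assumption].
  - auto.
  - destruct (Nat.eqb_spec Y X) as [->|_]; simpl.
    + eapply closedP_incl; [| |exact H]; intros z; simpl; tauto.
    + apply IH; auto.
      eapply closedP_incl; [| |exact H]; intros z; simpl; tauto.
Qed.

Lemma guarded_of_closedP (P : proc V) : forall ds Xs Z,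
  ~ In Z Xs -> closedP V ds Xs P -> guarded V Z P.
Proof.
  induction P as [c e P IH|c x P IHP Q IHQ|P IH|P IH|P IHP Q IHQ
                 |b P IHP Q IHQ|Y| |Y P IH];
    simpl; intros ds Xs Z HZ H; intuition eauto.
  - subst; auto.
  - destruct (Nat.eq_dec Y Z); [left; auto|right].
    eapply IH; [|eassumption]. simpl; intuition.
Qed.

Lemma guarded_substX (P : proc V) : forall Z X R,
  guarded V Z R -> guarded V Z P -> guarded V Z (substX V R X P).
Proof.
  induction P; simpl; intros Z X R HR H; intuition;
    destruct (Nat.eqb _ X); simpl; auto.
Qed.

Lemma guardedP_substX (P : proc V) : forall X R,
  guardedP V R -> (forall Z, guarded V Z R) -> guardedP V P ->
  guardedP V (substX V R X P).
Proof.
  induction P; simpl; intros X R HR HZ H; intuition;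
    destruct (Nat.eqb _ X); simpl; auto using guarded_substX.
Qed.

(* The number of sums and recursion binders met before reaching a guard;
   unfolding a guarded recursion strictly decreases it. *)
Fixpoint unguarded_size (P : proc V) : nat :=
  match P with
  | PSum _ P1 Q1 => S (unguarded_size P1 + unguarded_size Q1)
  | PFix _ _ P1 => S (unguarded_size P1)
  | _ => 0
  end.

Lemma unguarded_size_substX (P : proc V) : forall X R,
  guarded V X P -> unguarded_size (substX V R X P) = unguarded_size P.
Proof.
  induction P as [| | | |P IHP Q IHQ| |Y| |Y P IH];
    simpl; intros X R H; auto.
  - destruct H; rewrite IHP, IHQ; auto.
  - destruct (Nat.eqb_spec Y X); simpl; congruence.
  - destruct (Nat.eqb_spec Y X); simpl; auto.
    destruct H; [congruence|auto].
Qed.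

Definition unfold (X : pvar) (P : proc V) : proc V := substX V (PFix V X P) X P.

Lemma closed_proc_unfold X P :
  closed_proc V (PFix V X P) -> closed_proc V (unfold X P).
Proof. intros H; apply closedP_substX; auto. Qed.

Lemma guardedP_unfold X P :
  closed_proc V (PFix V X P) -> guardedP V (PFix V X P) ->
  guardedP V (unfold X P).
Proof.
  intros Hc Hg; apply guardedP_substX; try apply Hg; auto.
  intros Z; eapply guarded_of_closedP; [|exact Hc]; simpl; tauto.
Qed.

Lemma unguarded_size_unfold X P :
  guardedP V (PFix V X P) ->
  unguarded_size (unfold X P) < unguarded_size (PFix V X P).
Proof.
  intros [HX _]; unfold unfold; rewrite unguarded_size_substX; simpl; auto.
Qed.

Lemma closed_guarded_ind (Q : proc V -> Prop) :
  (forall P, closed_proc V P -> guardedP V P ->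
     (forall P', closed_proc V P' -> guardedP V P' ->
        unguarded_size P' < unguarded_size P -> Q P') -> Q P) ->
  forall P, closed_proc V P -> guardedP V P -> Q P.
Proof.
  intros Hstep P.
  induction P using (well_founded_induction
                       (Wf_nat.well_founded_ltof _ unguarded_size)).
  intros Hc Hg; apply Hstep; auto.
Qed.

Lemma eval_closed (e : exp V) : closedE V [] e -> exists v, eval V e = Some v.
Proof.
  induction e as [v|x|f e IH|f e1 IH1 e2 IH2]; simpl; intros H.
  - eauto.
  - destruct H.
  - destruct (IH H) as [w ->]; eauto.
  - destruct H as [H1 H2], (IH1 H1) as [v1 ->], (IH2 H2) as [v2 ->]; eauto.
Qed.

Lemma idle_or_exposed (G : env V) c : idle V G c \/ exposed V G c.
Proof. unfold idle, exposed; lia. Qed.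

Lemma beval_total (G : env V) b : closedB V [] b -> exists t, beval V G b t.
Proof.
  destruct b as [e1 e2|c]; simpl.
  - intros [H1 H2]; destruct (eval_closed e1 H1) as [v1 ?],
      (eval_closed e2 H2) as [v2 ?].
    destruct (classic (v1 = v2)); [exists true|exists false];
      exists v1, v2; auto.
  - destruct (idle_or_exposed G c); [exists false|exists true]; auto.
Qed.

End Syntax.

Section Progress.

Variable V : Type.
Variable err : V.
Variable delta : V -> nat.

Notation step := (step V err delta).

Definition instantaneous (l : act V) : Prop :=
  l = ATau V \/ exists c v, l = ASnd V c v.

Definition can_progress (G : env V) (W : sys V) : Prop :=
  (exists l W', instantaneous l /\ step G W l W') \/
  (exists W', step G W (ASig V) W').

Lemma instantaneous_unlift l : instantaneous l ->
  (exists w, l = ASnd V 0 w) \/ (exists l', instantaneous l' /\ l = lift V l').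
Proof.
  intros [->|[[|c] [v ->]]].
  - right; exists (ATau V); split; [left|]; auto.
  - left; eauto.
  - right; exists (ASnd V c v); split; [right|]; eauto.
Qed.

Lemma step_nu G n v W l W' : step (scons V (n, v) G) W (lift V l) W' ->
  exists W'', step G (SNu V n v W) l W''.
Proof. intros H; eexists; apply TResV, H. Qed.

Lemma proc_input_enabled G c v : forall P, closed_proc V P -> guardedP V P ->
  exists W', step G (SProc V P) (ARcv V c v) W'.
Proof.
  apply closed_guarded_ind; intros P Hc Hg IH.
  destruct (classic (rcv_conf V G (SProc V P) c)) as [[Hi Hr]|Hr];
    [|eexists; apply TRcvIgn, Hr].
  destruct P as [| c' x P1 Q1 | | | P1 Q1 | | | | X P1];
    simpl in Hr, Hc, Hg; try contradiction.
  - subst; eexists; apply TRcv, Hi.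
  - destruct Hc as [HcP HcQ], Hg as [HgP HgQ], Hr as [Hr|Hr].
    + destruct (IH P1) as [W' H]; simpl; auto; try lia.
      exists W'; apply TSumRcvL; [|split]; auto.
    + destruct (IH Q1) as [W' H]; simpl; auto; try lia.
      exists W'; apply TSumRcvR; [|split]; auto.
  - destruct (IH (unfold V X P1)) as [W' H];
      auto using closed_proc_unfold, guardedP_unfold, unguarded_size_unfold.
    exists W'; apply TRec, H.
Qed.

Lemma input_enabled W : forall G c v, closed_sys V W -> guardedS V W ->
  exists W', step G W (ARcv V c v) W'.
Proof.
  induction W as [P|c x P|W1 IH1 W2 IH2|n w W IH]; simpl;
    intros G ch v Hc Hg.
  - apply proc_input_enabled; auto.
  - eexists; apply TRcvIgn; intros [_ []].
  - destruct Hc as [Hc1 Hc2], Hg as [Hg1 Hg2],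
      (IH1 G ch v) as [W1' H1], (IH2 G ch v) as [W2' H2]; auto.
    eexists; eapply TRcvPar; eauto.
  - destruct (IH (scons V (n, w) G) (S ch) v) as [W' H]; auto.
    eapply step_nu; exact H.
Qed.

Lemma proc_progress G : forall P, closed_proc V P -> guardedP V P ->
  (exists l W', instantaneous l /\ step G (SProc V P) l W') \/
  (exists P', step G (SProc V P) (ASig V) (SProc V P')).
Proof.
  apply closed_guarded_ind; intros P Hc Hg IH.
  destruct P as [c e P1|c x P1 Q1|P1|P1|P1 Q1|b P1 Q1|X| |X P1];
    simpl in Hc, Hg.
  - destruct Hc as [He _], (eval_closed V e He) as [v Hv].
    left; do 2 eexists; split; [right; eauto|apply TSnd, Hv].
  - destruct (idle_or_exposed V G c).
    + right; eexists; apply TTimeout; auto.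
    + left; do 2 eexists; split; [left; reflexivity|apply TRcvLate; auto].
  - right; eexists; apply TSleep.
  - left; do 2 eexists; split; [left; reflexivity|apply TTau].
  - destruct Hc as [Hc1 Hc2], Hg as [Hg1 Hg2].
    destruct (IH P1) as [[l [W' [Hl H]]]|[P1' H1]]; simpl; auto; try lia.
    { left; exists l, W'; split; auto; apply TSumL; auto. }
    destruct (IH Q1) as [[l [W' [Hl H]]]|[Q1' H2]]; simpl; auto; try lia.
    { left; exists l, W'; split; auto; apply TSumR; auto. }
    right; eexists; apply TSumTime; eauto.
  - destruct Hc as [Hb _], (beval_total V G b Hb) as [[|] Ht];
      left; do 2 eexists; (split; [left; reflexivity|]).
    + apply TThen, Ht.
    + apply TElse, Ht.
  - contradiction.
  - right; eexists; apply TTimeNil.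
  - destruct (IH (unfold V X P1)) as [[l [W' [Hl H]]]|[P' H]];
      auto using closed_proc_unfold, guardedP_unfold, unguarded_size_unfold.
    + left; exists l, W'; split; auto; apply TRec, H.
    + right; exists P'; apply TRec, H.
Qed.

Lemma par_progress G W1 W2 :
  closed_sys V W1 -> guardedS V W1 -> closed_sys V W2 -> guardedS V W2 ->
  can_progress G W1 -> can_progress G W2 -> can_progress G (SPar V W1 W2).
Proof.
  unfold can_progress.
  intros Hc1 Hg1 Hc2 Hg2 [[l [W1' [[->|[c [v ->]]] H1]]]|[W1' S1]] P2.
  - left; do 2 eexists; split; [left; reflexivity|apply TTauParL, H1].
  - destruct (input_enabled W2 G c v) as [W2' H2]; auto.
    left; do 2 eexists; split; [right; eauto|eapply TSyncL; eauto].
  - destruct P2 as [[l [W2' [[->|[c [v ->]]] H2]]]|[W2' S2]].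
    + left; do 2 eexists; split; [left; reflexivity|apply TTauParR, H2].
    + destruct (input_enabled W1 G c v) as [W1'' H1]; auto.
      left; do 2 eexists; split; [right; eauto|eapply TSyncR; eauto].
    + right; eexists; apply TTimePar; eauto.
Qed.

Lemma progress W : forall G, closed_sys V W -> guardedS V W -> wf V G W ->
  can_progress G W.
Proof.
  induction W as [P|c x P|W1 IH1 W2 IH2|n v W IH]; simpl;
    intros G Hc Hg Hw; inversion Hw; subst; unfold can_progress at 1.
  - destruct (proc_progress G P) as [H|[P' H]]; eauto.
  - right; destruct (Nat.eq_dec (fst (G c)) 1).
    + eexists; apply TEndRcv; auto.
    + eexists; apply TActRcv; unfold exposed in *; lia.
  - destruct Hc as [Hc1 Hc2], Hg as [Hg1 Hg2]; apply par_progress; auto.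
  - destruct (IH (scons V (n, v) G)) as [[l [W' [Hl H]]]|[W' H]]; auto.
    + left; destruct (instantaneous_unlift l Hl) as [[w ->]|[l' [Hl' ->]]].
      * do 2 eexists; split; [left; reflexivity|apply TResI, H].
      * destruct (step_nu G n v W l' W' H) as [W'' H'']; eauto.
    + right; exact (step_nu G n v W (ASig V) W' H).
Qed.

End Progress.

Theorem mainTheorem11
  (V : Type) (err : V) (delta : V -> nat) (Hdelta : forall v, 1 <= delta v)
  (G : env V) (W : sys V) :
  closed_sys V W ->
  guardedS V W ->
  wf V G W ->
  ~ (exists (G' : env V) (W' : sys V), red_i V err delta G W G' W') ->
  exists (G'' : env V) (W'' : sys V), red_sigma V err delta G W G'' W''.
Proof.
  intros Hc Hg Hw Hstuck.
  destruct (progress V err delta W G Hc Hg Hw) as [[l [W' [Hl H]]]|[W' H]].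
  - exfalso; apply Hstuck; exists (upd V err delta l G), W', l; auto.
  - exists (upd V err delta (ASig V) G), W'; split; auto.
Qed.
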